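(* Consider the linear system $$\frac{d\boldsymbol{x}(t)}{dt} = \mathbf{A}\boldsymbol{x}(t) + \mathbf{B}_p\boldsymbol{p}(t) + \mathbf{B}_d\boldsymbol{d}(t),\qquad t\in\mathcal{T}=[0,t_f],$$ with $\boldsymbol{x}\in\mathbb{R}^{N_x}$, $\boldsymbol{p}\in\mathbb{R}^{N_p}_{+}$, where $\mathbf{A}$ has non-positive diagonal and non-negative off-diagonal entries and $\mathbf{B}_p\ge 0$ entrywise, with a given disturbance $\boldsymbol{d}$ and initial state $\boldsymbol{x}_0$. Fix bounds $\boldsymbol{0}\le\boldsymbol{p}_{\min}\le\boldsymbol{p}_{\max}$ and $\boldsymbol{x}_{\min}\le\boldsymbol{x}_{\max}$ (componentwise). For $t\in\mathcal{T}$ define matrices $\boldsymbol{\alpha}(t),\boldsymbol{\beta}(t)\in\mathbb{R}^{N_x\times N_p}$ by $$\alpha_{i,j}(t)=\max_{0\le\tau\le t}\big(e^{\mathbf{A}(t-\tau)}\mathbf{B}_p\big)_{i,j},\qquad \beta_{i,j}(t)=\min_{0\le\tau\le t}\big(e^{\mathbf{A}(t-\tau)}\mathbf{B}_p\big)_{i,j}.$$ Let $\boldsymbol{p}_+$ and $\boldsymbol{p}_-$ be feasible power trajectories (satisfying $\boldsymbol{p}_{\min}\le\boldsymbol{p}_\pm(t)\le\boldsymbol{p}_{\max}$ and, with the same $\boldsymbol{x}_0$ and $\boldsymbol{d}$, states satisfying $\boldsymbol{x}_{\min}\le\boldsymbol{x}_\pm(t)\le\boldsymbol{x}_{\max}$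 for all $t$), and set $$\boldsymbol{b}_{\pm}(t)=\int_0^t e^{\mathbf{A}(t-\tau)}\mathbf{B}_p\,\boldsymbol{p}_\pm(\tau)\,d\tau.$$ Let $\boldsymbol{p}_a$ satisfy $\boldsymbol{p}_{\min}\le\boldsymbol{p}_a(t)\le\boldsymbol{p}_{\max}$ for all $t$ and, for all $t\in\mathcal{T}$, $$\boldsymbol{\alpha}(t)\int_0^t\boldsymbol{p}_a(\tau)\,d\tau\le\boldsymbol{b}_+(t),\qquad \boldsymbol{\beta}(t)\int_0^t\boldsymbol{p}_a(\tau)\,d\tau\ge\boldsymbol{b}_-(t)$$ (componentwise). Then the state $\boldsymbol{x}_a$ produced by $\boldsymbol{p}_a$ (same $\boldsymbol{x}_0$, $\boldsymbol{d}$) satisfies $\boldsymbol{x}_{\min}\le\boldsymbol{x}_a(t)\le\boldsymbol{x}_{\max}$ for all $t\in\mathcal{T}$.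
   Context: Integrals of vectors are componentwise; vector inequalities are componentwise. States are given by $\boldsymbol{x}(t)=e^{\mathbf{A}t}\boldsymbol{x}_0+\int_0^t e^{\mathbf{A}(t-\tau)}(\mathbf{B}_d\boldsymbol{d}(\tau)+\mathbf{B}_p\boldsymbol{p}(\tau))\,d\tau$. A matrix with non-negative off-diagonal entries is called Metzler. *)

From HB Require Import structures.
From mathcomp Require Import all_boot all_order all_algebra.
From mathcomp Require Import all_classical all_reals all_analysis.
Set Implicit Arguments. Unset Strict Implicit. Unset Printing Implicit Defensive.
Import Order.TTheory GRing.Theory Num.Theory numFieldNormedType.Exports.
Local Open Scope classical_set_scope.
Local Open Scope ring_scope.

Definition expm (R : realType) (n : nat) (A : 'M[R]_n) (t : R) : 'M[R]_n :=
  \matrix_(i, j) lim ((fun N : nat =>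
      ((\sum_(k < N) ((t ^+ k / (k`!)%:R) *: A ^+ k)) i j : R)) @ \oo).

Definition mxle (R : realType) (m n : nat) (M N : 'M[R]_(m, n)) : Prop :=
  forall i j, M i j <= N i j.

Definition metzler (R : realType) (n : nat) (A : 'M[R]_n) : Prop :=
  forall i j, i != j -> 0 <= A i j.

Definition vint (R : realType) (n : nat) (a b : R) (f : R -> 'cV[R]_n)
  : 'cV[R]_n :=
  \col_i Rintegral (@lebesgue_measure R) `[a, b] (fun s => f s i 0).

Definition state (R : realType) (Nx Np Nd : nat) (A : 'M[R]_Nx)
  (Bd : 'M[R]_(Nx, Nd)) (Bp : 'M[R]_(Nx, Np)) (x0 : 'cV[R]_Nx)
  (d : R -> 'cV[R]_Nd) (p : R -> 'cV[R]_Np) (t : R) : 'cV[R]_Nx :=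
  expm A t *m x0 + vint 0 t (fun s => expm A (t - s) *m (Bd *m d s + Bp *m p s)).

Definition alpha (R : realType) (Nx Np : nat) (A : 'M[R]_Nx)
  (Bp : 'M[R]_(Nx, Np)) (t : R) : 'M[R]_(Nx, Np) :=
  \matrix_(i, j) sup [set (expm A (t - s) *m Bp) i j | s in `[0, t]].

Definition beta (R : realType) (Nx Np : nat) (A : 'M[R]_Nx)
  (Bp : 'M[R]_(Nx, Np)) (t : R) : 'M[R]_(Nx, Np) :=
  \matrix_(i, j) inf [set (expm A (t - s) *m Bp) i j | s in `[0, t]].

(* For s in [0, t] each entry of the kernel e^{A(t-s)} B_p lies between the
   corresponding entries of beta(t) and alpha(t), so for a nonnegative input p_a
     beta(t) int_0^t p_a  <=  int_0^t e^{A(t-s)} B_p p_a(s) ds  <=  alpha(t) int_0^t p_a,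
   and the hypotheses sandwich this input response between b_-(t) and b_+(t).
   The three states share the free and the disturbance responses, hence
   x_-(t) <= x_a(t) <= x_+(t), and x_+, x_- are feasible. *)

From HB Require Import structures.
From mathcomp Require Import all_boot all_order all_algebra.
From mathcomp Require Import all_classical all_reals all_analysis.
From mathcomp Require Import lra.
Import Order.TTheory GRing.Theory Num.Theory numFieldNormedType.Exports.
Local Open Scope classical_set_scope.
Local Open Scope ring_scope.

Section MatrixExponential.
Context {R : realType} {n : nat} (A : 'M[R]_n).

Definition mxabs_sum : R := \sum_i \sum_j `|A i j|.

Lemma mxabs_sum_ge0 : 0 <= mxabs_sum.
Proof. by apply: sumr_ge0 => i _; apply: sumr_ge0. Qed.

Lemma norm_exprmx_le k i j : `|(A ^+ k) i j| <= mxabs_sum ^+ k.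
Proof.
elim: k i j => [|k IHk] i j.
  by rewrite expr0 !mxE; case: (i == j); rewrite ?normr1 ?normr0.
have col_le : \sum_l `|A l j| <= mxabs_sum.
  apply: ler_sum => l _.
  by rewrite (bigD1 j) //= lerDl sumr_ge0.
rewrite exprSr -mulmxE mxE exprSr.
apply: le_trans (ler_norm_sum _ _ _) _.
apply: le_trans (ler_wpM2l (exprn_ge0 _ mxabs_sum_ge0) col_le).
rewrite mulr_sumr; apply: ler_sum => l _.
by rewrite normrM ler_wpM2r.
Qed.

Definition expm_coef (u : R) i j (k : nat) : R :=
  u ^+ k / (k`!)%:R * (A ^+ k) i j.

Lemma norm_expm_coef_le u i j k :
  `|expm_coef u i j k| <= exp_coeff (`|u| * mxabs_sum) k.
Proof.
rewrite /expm_coef /exp_coeff /= normrM normrM exprMn normrX normfV normr_nat.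
by rewrite [X in _ <= X]mulrAC ler_wpM2l ?norm_exprmx_le.
Qed.

Lemma cvg_normed_expm_series u i j : cvgn [normed series (expm_coef u i j)].
Proof.
apply: (@series_le_cvg _ _ (exp_coeff (`|u| * mxabs_sum))).
- by move=> k; exact: normr_ge0.
- by move=> k; exact: exp_coeff_ge0 (mulr_ge0 (normr_ge0 _) mxabs_sum_ge0).
- exact: norm_expm_coef_le.
- exact: is_cvg_series_exp_coeff.
Qed.

Lemma expmE u i j : expm A u i j = limn (series (expm_coef u i j)).
Proof.
rewrite /expm mxE; congr (limn _); apply: funext => N.
by rewrite /series /= summxE big_mkord; apply: eq_bigr => k _; rewrite mxE.
Qed.

Lemma expm_series_cvg u i j : series (expm_coef u i j) @ \oo --> expm A u i j.
Proof. by rewrite expmE; apply: normed_cvg; exact: cvg_normed_expm_series. Qed.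

Lemma norm_expm_le b u i j : `|u| <= b -> `|expm A u i j| <= expR (b * mxabs_sum).
Proof.
move=> ub; rewrite expmE.
apply: le_trans (lim_series_norm (cvg_normed_expm_series u i j)) _.
apply: ler_lim; [exact: cvg_normed_expm_series | exact: is_cvg_series_exp_coeff|].
near=> N; apply: ler_sum => k _; apply: le_trans (norm_expm_coef_le _ _ _ _) _.
rewrite /exp_coeff /= ler_wpM2r ?invr_ge0 ?ler0n // lerXn2r ?nnegrE //.
- by rewrite mulr_ge0 ?mxabs_sum_ge0.
- by rewrite mulr_ge0 ?mxabs_sum_ge0 // (le_trans (normr_ge0 _) ub).
- by rewrite ler_wpM2r ?mxabs_sum_ge0.
Unshelve. all: by end_near. Qed.

Lemma measurable_fun_expm d (T : measurableType d) (D : set T) (f : T -> R) i j :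
  measurable_fun D f -> measurable_fun D (fun x => expm A (f x) i j).
Proof.
move=> mf.
apply: (measurable_realfun.measurable_fun_cvg
  (h := fun N x => series (expm_coef (f x) i j) N)); last first.
  by move=> x _; exact: expm_series_cvg.
move=> N; apply: measurable_sum => k.
apply: measurable_realfun.measurable_funM => //.
apply: measurable_realfun.measurable_funM => //.
exact: measurable_realfun.measurable_funX.
Qed.

End MatrixExponential.

Section BoundedMeasurable.
Set Implicit Arguments.
Context {d : measure_display} {T : measurableType d} {R : realType}.
Variables (mu : {measure set T -> \bar R}) (D : set T).
Hypotheses (mD : measurable D) (muD_lty : (mu D < +oo)%E).

Definition bounded_measurable (f : T -> R) :=
  measurable_fun D f /\ exists C, forall x, D x -> `|f x| <= C.

Definition bounded_measurable_mx m n (K : T -> 'M[R]_(m, n)) :=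
  forall i j, bounded_measurable (fun x => K x i j).

Definition integrable_mx m n (v : T -> 'M[R]_(m, n)) :=
  forall i j, mu.-integrable D (fun x => (v x i j)%:E).

Lemma bounded_measurable_cst c : bounded_measurable (cst c).
Proof. by split; [exact: measurable_cst | exists `|c|]. Qed.

Lemma bounded_measurableD f g : bounded_measurable f -> bounded_measurable g ->
  bounded_measurable (fun x => f x + g x).
Proof.
move=> [mf [C1 fC1]] [mg [C2 gC2]].
split; first exact: measurable_realfun.measurable_funD.
by exists (C1 + C2) => x Dx; rewrite (le_trans (ler_normD _ _)) ?lerD ?fC1 ?gC2.
Qed.

Lemma bounded_measurableM f g : bounded_measurable f -> bounded_measurable g ->
  bounded_measurable (fun x => f x * g x).
Proof.
move=> [mf [C1 fC1]] [mg [C2 gC2]].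
split; first exact: measurable_realfun.measurable_funM.
exists (`|C1| * `|C2|) => x Dx; rewrite normrM.
by apply: ler_pM => //; apply: le_trans (ler_norm _); [exact: fC1 | exact: gC2].
Qed.

Lemma bounded_measurable_sum (I : Type) (r : seq I) (F : I -> T -> R) :
  (forall l, bounded_measurable (F l)) ->
  bounded_measurable (fun x => \sum_(l <- r) F l x).
Proof.
move=> bmF; elim: r => [|a r IHr].
  under [fun x => _]funext do rewrite big_nil; exact: bounded_measurable_cst.
under [fun x => _]funext do rewrite big_cons; exact: bounded_measurableD.
Qed.

Lemma integrable_bounded_measurableM h g : bounded_measurable h ->
  mu.-integrable D (EFin \o g) -> mu.-integrable D (EFin \o (fun x => h x * g x)).
Proof.
move=> [mh [C hC]] ig.
have hbd : [bounded h x | x in D].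
  exists C; split; first exact: num_real.
  by move=> M CM x Dx; apply: le_trans (hC x Dx) (ltW CM).
have := integrableMr mD mh hbd ig.
by apply: eq_integrable => // x _ /=; rewrite EFinM.
Qed.

Lemma integrable_bounded_measurable f : bounded_measurable f ->
  mu.-integrable D (EFin \o f).
Proof.
move=> bmf; have int1 : mu.-integrable D (EFin \o cst (1 : R)).
  apply/integrableP; split; first exact/measurable_realfun.measurable_EFinP/measurable_cst.
  under eq_integral do rewrite /= normr1.
  by rewrite integral_cst // mul1e.
have := integrable_bounded_measurableM bmf int1.
by apply: eq_integrable => // x _ /=; rewrite mulr1.
Qed.

Lemma integrable_sumr (I : Type) (r : seq I) (F : I -> T -> R) :
  (forall l, mu.-integrable D (EFin \o F l)) ->
  mu.-integrable D (EFin \o (fun x => \sum_(l <- r) F l x)).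
Proof.
move=> iF; have := @integrable_sum _ _ _ mu D mD I r xpredT _ (fun l _ => iF l).
by apply: eq_integrable => // x _ /=; rewrite sumEFin.
Qed.

Lemma Rintegral_sum (I : Type) (r : seq I) (F : I -> T -> R) :
  (forall l, mu.-integrable D (EFin \o F l)) ->
  Rintegral mu D (fun x => \sum_(l <- r) F l x) = \sum_(l <- r) Rintegral mu D (F l).
Proof.
move=> iF; elim: r => [|a r IHr].
  by under eq_Rintegral do rewrite big_nil; rewrite big_nil Rintegral_cst // mul0r.
under eq_Rintegral do rewrite big_cons.
by rewrite big_cons RintegralD ?IHr //; exact: integrable_sumr.
Qed.

Lemma sum_mulr_Rintegral (I : finType) (c : I -> R) (F : I -> T -> R) :
  (forall l, mu.-integrable D (EFin \o F l)) ->
  \sum_l c l * Rintegral mu D (F l) = Rintegral mu D (fun x => \sum_l c l * F l x).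
Proof.
move=> iF; rewrite Rintegral_sum; last first.
  by move=> l; apply: integrable_bounded_measurableM (bounded_measurable_cst _) _.
by apply: eq_bigr => l _; rewrite RintegralZl.
Qed.

Lemma bounded_measurable_mx_cst m n (B : 'M[R]_(m, n)) :
  bounded_measurable_mx (fun=> B).
Proof. by move=> i j; exact: bounded_measurable_cst. Qed.

Lemma bounded_measurable_mulmx m n p (K : T -> 'M[R]_(m, n)) (L : T -> 'M[R]_(n, p)) :
  bounded_measurable_mx K -> bounded_measurable_mx L ->
  bounded_measurable_mx (fun x => K x *m L x).
Proof.
move=> bmK bmL i j; under [fun x => _]funext do rewrite mxE.
by apply: bounded_measurable_sum => l; exact: bounded_measurableM.
Qed.

Lemma integrable_mx_bounded_measurable m n (v : T -> 'M[R]_(m, n)) :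
  bounded_measurable_mx v -> integrable_mx v.
Proof. by move=> bmv i j; exact: integrable_bounded_measurable. Qed.

Lemma integrable_mulmx m n p (K : T -> 'M[R]_(m, n)) (v : T -> 'M[R]_(n, p)) :
  bounded_measurable_mx K -> integrable_mx v -> integrable_mx (fun x => K x *m v x).
Proof.
move=> bmK iv i j.
have : mu.-integrable D (EFin \o fun x => \sum_l K x i l * v x l j).
  apply: integrable_sumr => l.
  exact: (integrable_bounded_measurableM (g := fun x => v x l j) (bmK i l) (iv l j)).
by apply: eq_integrable => // x _ /=; rewrite mxE.
Qed.

Lemma bounded_measurable_mx_between m n (v : T -> 'M[R]_(m, n)) lo hi :
  (forall i j, measurable_fun D (fun x => v x i j)) ->
  (forall x, D x -> mxle lo (v x) /\ mxle (v x) hi) ->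
  bounded_measurable_mx v.
Proof.
move=> mv vb i j; split => //; exists (`|lo i j| + `|hi i j|) => x Dx.
have [/(_ i j) lov /(_ i j) vhi] := vb x Dx.
have /ler_normlP[lo_abs _] := lexx `|lo i j|.
have := ler_norm (hi i j); have := normr_ge0 (hi i j); have := normr_ge0 (lo i j).
by rewrite ler_norml => *; apply/andP; split; lra.
Qed.

Section SupInfBounds.
Variables (m n : nat) (K : T -> 'M[R]_(m, n)) (v : T -> 'cV[R]_n).
Hypotheses (bmK : bounded_measurable_mx K) (bmv : bounded_measurable_mx v).
Hypothesis v_ge0 : forall x j, D x -> 0 <= v x j 0.

Let integrable_v j : mu.-integrable D (EFin \o fun x => v x j 0).
Proof. exact: integrable_bounded_measurable (bmv j 0). Qed.

Let integrable_Kv i : mu.-integrable D (EFin \o fun x => (K x *m v x) i 0).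
Proof. exact: integrable_mx_bounded_measurable (bounded_measurable_mulmx bmK bmv) i 0. Qed.

Let integrable_lincomb (c : 'I_n -> R) :
  mu.-integrable D (EFin \o fun x => \sum_j c j * v x j 0).
Proof.
apply: integrable_bounded_measurable; apply: bounded_measurable_sum => j.
by apply: bounded_measurableM; [exact: bounded_measurable_cst | exact: bmv].
Qed.

Lemma Rintegral_mulmx_le_sup i :
  Rintegral mu D (fun x => (K x *m v x) i 0) <=
  \sum_j sup [set K x i j | x in D] * Rintegral mu D (fun x => v x j 0).
Proof.
rewrite sum_mulr_Rintegral //; apply: le_Rintegral => // x Dx.
rewrite mxE; apply: ler_sum => j _; rewrite ler_wpM2r ?v_ge0 //.
apply: ub_le_sup; last by exists x.
have [_ [C KC]] := bmK i j.
by exists C => _ [y Dy <-]; exact: le_trans (ler_norm _) (KC y Dy).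
Qed.

Lemma Rintegral_mulmx_ge_inf i :
  \sum_j inf [set K x i j | x in D] * Rintegral mu D (fun x => v x j 0) <=
  Rintegral mu D (fun x => (K x *m v x) i 0).
Proof.
rewrite sum_mulr_Rintegral //; apply: le_Rintegral => // x Dx.
rewrite [leRHS]mxE; apply: ler_sum => j _; rewrite ler_wpM2r ?v_ge0 //.
apply: ge_inf; last by exists x.
have [_ [C KC]] := bmK i j.
by exists (- C) => _ [y Dy <-]; have /ler_normlP[] := KC y Dy; rewrite lerNl.
Qed.

End SupInfBounds.

End BoundedMeasurable.

Section LinearSystem.
Set Implicit Arguments.
Variables (R : realType) (Nx Np Nd : nat) (A : 'M[R]_Nx).
Variables (Bp : 'M[R]_(Nx, Np)) (Bd : 'M[R]_(Nx, Nd)).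
Variables (x0 : 'cV[R]_Nx) (d : R -> 'cV[R]_Nd) (t : R).
Local Notation mu := (@lebesgue_measure R).
Local Notation I := (`[0, t]%classic : set (measurableTypeR R)).

Let measurable_I : measurable I. Proof. exact: measurable_itv. Qed.

Let lebesgue_I_lty : (mu I < +oo)%E.
Proof. by rewrite lebesgue_measure_itv; case: ifP; rewrite ?ltry. Qed.

Lemma bounded_measurable_expm_sub : bounded_measurable_mx I (fun s => expm A (t - s)).
Proof.
move=> i j; split.
  by apply: measurable_fun_expm; apply: measurable_realfun.measurable_funB.
exists (expR (t * mxabs_sum A)) => s; rewrite /= in_itv => /andP[s0 st].
by apply: norm_expm_le; rewrite ger0_norm ?subr_ge0 // lerBlDr lerDl.
Qed.

Let bounded_measurable_kernel m (B : 'M[R]_(Nx, m)) :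
  bounded_measurable_mx I (fun s => expm A (t - s) *m B).
Proof.
exact: bounded_measurable_mulmx bounded_measurable_expm_sub (bounded_measurable_mx_cst _ _).
Qed.

Hypothesis integrable_d : integrable_mx mu I d.

Lemma state_entryE p i : bounded_measurable_mx I p ->
  state A Bd Bp x0 d p t i 0 = (expm A t *m x0) i 0
    + Rintegral mu I (fun s => (expm A (t - s) *m Bd *m d s) i 0)
    + Rintegral mu I (fun s => (expm A (t - s) *m Bp *m p s) i 0).
Proof.
move=> bm_p; rewrite /state mxE /vint [X in _ + X]mxE -addrA -RintegralD //.
- by congr (_ + _); apply: eq_Rintegral => s _; rewrite mulmxDr !mulmxA mxE.
- exact: integrable_mulmx (bounded_measurable_kernel Bd) integrable_d i 0.
- apply: (integrable_mx_bounded_measurable _ measurable_I lebesgue_I_lty) i 0.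
  exact: bounded_measurable_mulmx (bounded_measurable_kernel Bp) bm_p.
Qed.

Lemma state_le_of_response_le p q i :
  bounded_measurable_mx I p -> bounded_measurable_mx I q ->
  Rintegral mu I (fun s => (expm A (t - s) *m Bp *m p s) i 0) <=
  Rintegral mu I (fun s => (expm A (t - s) *m Bp *m q s) i 0) ->
  state A Bd Bp x0 d p t i 0 <= state A Bd Bp x0 d q t i 0.
Proof. by move=> bm_p bm_q; rewrite !state_entryE // lerD2l. Qed.

Section NonnegativeInput.
Variable p : R -> 'cV[R]_Np.
Hypotheses (bm_p : bounded_measurable_mx I p) (p_ge0 : forall s j, I s -> 0 <= p s j 0).

Lemma response_le_alpha i :
  Rintegral mu I (fun s => (expm A (t - s) *m Bp *m p s) i 0) <=
  (alpha A Bp t *m vint 0 t p) i 0.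
Proof.
rewrite mxE; under eq_bigr do rewrite [alpha _ _ _ _ _]mxE [vint _ _ _ _ _]mxE.
exact: (Rintegral_mulmx_le_sup _ measurable_I lebesgue_I_lty
  (bounded_measurable_kernel Bp) bm_p p_ge0 i).
Qed.

Lemma beta_le_response i :
  (beta A Bp t *m vint 0 t p) i 0 <=
  Rintegral mu I (fun s => (expm A (t - s) *m Bp *m p s) i 0).
Proof.
rewrite mxE; under eq_bigr do rewrite [beta _ _ _ _ _]mxE [vint _ _ _ _ _]mxE.
exact: (Rintegral_mulmx_ge_inf _ measurable_I lebesgue_I_lty
  (bounded_measurable_kernel Bp) bm_p p_ge0 i).
Qed.

End NonnegativeInput.

End LinearSystem.

Theorem theorem2 (R : realType) (Nx Np Nd : nat) (tf : R)
  (A : 'M[R]_Nx) (Bp : 'M[R]_(Nx, Np)) (Bd : 'M[R]_(Nx, Nd))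
  (x0 : 'cV[R]_Nx) (d : R -> 'cV[R]_Nd)
  (pmin pmax : 'cV[R]_Np) (xmin xmax : 'cV[R]_Nx)
  (pplus pminus pa : R -> 'cV[R]_Np) :
  0 <= tf ->
  (forall i, A i i <= 0) -> metzler A ->
  (forall i j, 0 <= Bp i j) ->
  (* regularity of the data: measurable inputs, integrable disturbance *)
  (forall k, measurable_fun `[0, tf] (fun s => d s k 0)) ->
  (forall k, (@lebesgue_measure R).-integrable `[0, tf]
               (fun s => (d s k 0)%:E)) ->
  (forall k, measurable_fun `[0, tf] (fun s => pplus s k 0)) ->
  (forall k, measurable_fun `[0, tf] (fun s => pminus s k 0)) ->
  (forall k, measurable_fun `[0, tf] (fun s => pa s k 0)) ->
  (* bounds *)
  mxle 0 pmin -> mxle pmin pmax -> mxle xmin xmax ->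
  (* p_+ and p_- are feasible *)
  (forall t, t \in `[0, tf] ->
     mxle pmin (pplus t) /\ mxle (pplus t) pmax /\
     mxle xmin (state A Bd Bp x0 d pplus t) /\
     mxle (state A Bd Bp x0 d pplus t) xmax) ->
  (forall t, t \in `[0, tf] ->
     mxle pmin (pminus t) /\ mxle (pminus t) pmax /\
     mxle xmin (state A Bd Bp x0 d pminus t) /\
     mxle (state A Bd Bp x0 d pminus t) xmax) ->
  (* p_a *)
  (forall t, t \in `[0, tf] -> mxle pmin (pa t) /\ mxle (pa t) pmax) ->
  (forall t, t \in `[0, tf] ->
     mxle (alpha A Bp t *m vint 0 t pa)
          (vint 0 t (fun s => expm A (t - s) *m Bp *m pplus s)) /\
     mxle (vint 0 t (fun s => expm A (t - s) *m Bp *m pminus s))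
          (beta A Bp t *m vint 0 t pa)) ->
  forall t, t \in `[0, tf] ->
    mxle xmin (state A Bd Bp x0 d pa t) /\
    mxle (state A Bd Bp x0 d pa t) xmax.
Proof.
move=> _ _ _ _ _ int_d m_pplus m_pminus m_pa pmin_ge0 _ _ feas_plus feas_minus
  bounds_pa alpha_beta_pa t t_tf.
have sub : `[0, t] `<=` `[0, tf].
  move: t_tf; rewrite in_itv /= => /andP[_ ttf] s /=; rewrite !in_itv /=.
  by move=> /andP[-> st]; exact: le_trans st ttf.
have m_itv u : measurable (`[0, u] : set (measurableTypeR R)) := measurable_itv _.
have int_d_t : integrable_mx (@lebesgue_measure R) `[0, t] d.
  move=> k j; rewrite (ord1 j).
  exact: integrableS (m_itv tf) (m_itv t) sub (int_d k).
have bm_input (p : R -> 'cV[R]_Np) : (forall k, measurable_fun `[0, tf] (fun s => p s k 0)) ->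
    (forall s, s \in `[0, tf] -> mxle pmin (p s) /\ mxle (p s) pmax) ->
    bounded_measurable_mx (`[0, t] : set (measurableTypeR R)) p.
  move=> m_p p_bounds.
  apply: (bounded_measurable_mx_between p _ (fun s Is => p_bounds s (sub s Is))).
  by move=> k j; rewrite (ord1 j); exact: measurable_funS (measurable_itv _) sub (m_p k).
have pa_ge0 s j : (`[0, t]%classic : set R) s -> 0 <= pa s j 0.
  by move=> /sub/bounds_pa[/(_ j 0) + _]; apply: le_trans; have := pmin_ge0 j 0; rewrite mxE.
have bm_pa := bm_input pa m_pa bounds_pa.
have bm_plus := bm_input pplus m_pplus (fun s hs => let: conj lo (conj hi _) := feas_plus s hs in conj lo hi).
have bm_minus := bm_input pminus m_pminus (fun s hs => let: conj lo (conj hi _) := feas_minus s hs in conj lo hi).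
have [pa_alpha beta_pa] := alpha_beta_pa t t_tf.
have [_ [_ [_ x_plus_le]]] := feas_plus t t_tf.
have [_ [_ [x_minus_ge _]]] := feas_minus t t_tf.
split=> i j; rewrite (ord1 j).
- apply: le_trans (x_minus_ge i 0) _.
  apply: (state_le_of_response_le _ _ _ _ _ int_d_t _ bm_minus bm_pa).
  apply: le_trans (beta_le_response _ _ _ bm_pa pa_ge0 i).
  by have := beta_pa i 0; rewrite [X in X <= _]mxE.
- apply: le_trans _ (x_plus_le i 0).
  apply: (state_le_of_response_le _ _ _ _ _ int_d_t _ bm_pa bm_plus).
  apply: le_trans (response_le_alpha _ _ _ bm_pa pa_ge0 i) _.
  by have := pa_alpha i 0; rewrite [X in _ <= X]mxE.
Qed.
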